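(* Let $p\in(0,1)$. The GHoC Markov chain with state space $S=\mathbb N_0\cup\{\infty\}$ and transition matrix $\Pi_p$ possesses a unique stationary distribution; let $\mathbb P_p^{GHoC}$ denote the law of the corresponding stationary two-sided chain $(n_i)_{i\in\mathbb{Z}}$. Then the sequence $(\tau(n_i))_{i\in\mathbb{Z}}$ is distributed according to the TBF $\mu'_p$, i.e. $\tau(\mathbb P_p^{GHoC})=\mu'_p$.
   Context: Fix $p\in(0,1)$. $\Omega=\{0,1\}^{\mathbb{Z}}$, $\mu_p=\mathrm{Ber}(p)^{\otimes\mathbb{Z}}$, $T:\Omega\to\Omega$, $(T\omega)_i=\omega_i\big(1-(1-\omega_{i-1})(1-\omega_{i+1})\big)$, and the TBF is $\mu'_p=\mu_p\circ T^{-1}$ on $\Omega'=T(\Omega)$. Let $\lambda_{PF}=\tfrac12\big(1-p+\sqrt{(1-p)(3p+1)}\big)$, $\lambda_r=\tfrac12\big(1-p-\sqrt{(1-p)(3p+1)}\big)$, $a=\lambda_r/\lambda_{PF}\in(-1,0)$, and define $g_p:S\to[0,1]$ by $g_p(1)=1-p$, $g_p(\infty)=\lambda_{PF}$, and for $n\ge2$: $g_p(n)=\dfrac{(-1)^{n+1}|a|^n\frac{\lambda_{PF}}{1-\lambda_r}+\frac{\lambda_{PF}}{1-\lambda_{PF}}}{(-1)^n|a|^{n-1}\frac{1}{1-\lambda_r}+\frac{1}{1-\lambda_{PF}}}$. The generalized house-of-cards (GHoC) chain on $S$ (with $\infty+1=\infty$) has transition probabilities: $\Pi_p(0,1)=1$;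 $\Pi_p(1,1)=p$, $\Pi_p(1,2)=1-p$; for $i\in\{2,3,\dots\}\cup\{\infty\}$, $\Pi_p(i,i+1)=g_p(i)$ and $\Pi_p(i,0)=1-g_p(i)$; all other entries are $0$. (The state $n_i$ encodes the distance from site $i$ to the nearest pair of adjacent occupied sites in its past, with value $0$ when the two preceding sites are (empty, occupied).) The map $\tau:S\to\{0,1\}$ is $\tau(n)=\mathbb 1_{\{0,1\}}(n)$, applied coordinatewise to paths. *)

From HB Require Import structures.
From mathcomp Require Import all_boot all_order all_algebra.
From mathcomp Require Import all_classical all_reals all_analysis.
Set Implicit Arguments. Unset Strict Implicit. Unset Printing Implicit Defensive.
Import Order.TTheory GRing.Theory Num.Theory.
Local Open Scope classical_set_scope.
Local Open Scope ring_scope.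

(** State space S = N_0 ∪ {∞}: [Some n] is the state n, [None] is ∞. *)
Definition GState := option nat.

Section GHoC.
Variables (R : realType) (p : R).

Definition lamPF : R := (1 - p + Num.sqrt ((1 - p) * (3 * p + 1))) / 2.
Definition lamr : R := (1 - p - Num.sqrt ((1 - p) * (3 * p + 1))) / 2.
Definition a_ratio : R := lamr / lamPF.

Definition g_fin (n : nat) : R :=
  ((-1) ^+ n.+1 * `|a_ratio| ^+ n * (lamPF / (1 - lamr)) + lamPF / (1 - lamPF)) /
  ((-1) ^+ n * `|a_ratio| ^+ n.-1 * (1 / (1 - lamr)) + 1 / (1 - lamPF)).

(** g_p on S \ {0} (value at 0 is irrelevant and set to 0) *)
Definition g_p (s : GState) : R :=
  match s with
  | None => lamPF
  | Some 0 => 0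
  | Some 1 => 1 - p
  | Some n => g_fin n
  end.

Definition Pi_p (s t : GState) : R :=
  match s with
  | Some 0 => if t == Some 1 then 1 else 0
  | Some 1 => if t == Some 1 then p else if t == Some 2 then 1 - p else 0
  | Some n => if t == Some n.+1 then g_p (Some n)
              else if t == Some 0 then 1 - g_p (Some n) else 0
  | None => if t == None then g_p None
            else if t == Some 0 then 1 - g_p None else 0
  end.

Definition stationary_dist (pi : GState -> R) : Prop :=
  (forall s, 0 <= pi s) /\
  (\esum_(s in [set: GState]) (pi s)%:E = 1%E) /\
  (forall t, \esum_(s in [set: GState]) (pi s * Pi_p s t)%:E = (pi t)%:E).

Definition tau (s : GState) : bool := (s == Some 0) || (s == Some 1).

(** Probability, under the stationary chain started from pi, of the path
    (n_m, ..., n_{m+k}) = s (independent of m by stationarity). *)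
Definition path_prob (pi : GState -> R) (s : seq GState) : R :=
  match s with
  | [::] => 1
  | s0 :: rest => pi s0 * \prod_(j < size rest) Pi_p (nth s0 s j) (nth s0 s j.+1)
  end.

(** Law of (tau(n_i)) under the stationary GHoC chain, on the cylinder
    {(tau n_{m+j})_{j < size x} = x}. *)
Definition ghoc_tau_cyl (pi : GState -> R) (x : seq bool) : \bar R :=
  \esum_(s in [set s : seq GState | size s = size x /\ map tau s = x])
     (path_prob pi s)%:E.

End GHoC.

Definition Omega := int -> bool.
Definition T_map (w : Omega) : Omega :=
  fun i => w i && (w (i - 1) || w (i + 1)).

Section TBF.
Variables (R : realType) (p : R).

Definition ext (a : int) (n : nat) (w : n.-tuple bool) : Omega :=
  fun i => if ((0 <= i - a) && (i - a < n%:Z))%R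
           then nth false w `|i - a|%N else false.

(** mu_p of an event E depending only on the coordinates in [a, a+n):
    sum over the configurations of the window with product Bernoulli weights. *)
Definition mu_p_window (a : int) (n : nat) (E : Omega -> bool) : R :=
  \sum_(w : n.-tuple bool)
     (\prod_(j < n) (if tnth w j then p else 1 - p)) * (E (ext a w))%:R.

(** mu'_p = mu_p o T^{-1} on the cylinder {w' | w'_(m+j) = x_j, j < size x}.
    T^{-1} of this cylinder depends only on the window [m-1, m+size x]. *)
Definition tbf_cyl (m : int) (x : seq bool) : R :=
  mu_p_window (m - 1) (size x).+2
    (fun w => [forall j : 'I_(size x), T_map w (m + j%:Z) == nth false x j]).

End TBF.

From mathcomp Require Import all_boot all_order all_algebra.
From mathcomp Require Import all_classical all_reals all_analysis.
From mathcomp Require Import lra ring zify.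
Import Order.TTheory GRing.Theory Num.Theory.
Local Open Scope classical_set_scope.
Local Open Scope ring_scope.

Set Implicit Arguments.
Unset Strict Implicit.
Unset Printing Implicit Defensive.

(* Given the current state s, each tau-symbol b has exactly one successor of s
   compatible with it, so the tau-cylinder of the stationary chain is a sum over
   the initial state of pi(s) times the product of the transitions along the
   forced path.  On the Bernoulli side, conditioning on the two sites before the
   window turns the TBF cylinder into a recursion tbf_cond a b over the word.  The
   two are linked by a probability kernel hidden_pair s on pairs of sites, with
   path weight (s, y) = sum_(a,b) hidden_pair s a b * tbf_cond a b y.  This works
   because g_p, written as a ratio of combinations of lamPF^n and lamr^n, obeys
   g(1) = 1 and g(n+1) = 1 - p + p (1 - p) / g(n): both eigenvalues solve
   l^2 = (1 - p) l + p (1 - p).  The stationary law is pi(0) = (1 - p) p^2,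
   pi(1) = p^2, pi(n+1) = g(n) pi(n), pi(oo) = 0; its tail sums telescope and
   decay geometrically since g(n) <= (1 + p - p^2) / (1 + p) < 1, and the balance
   equations determine any stationary law up to a factor.  Finally
   sum_s pi(s) hidden_pair s a b is exactly the weight of (a, b) in one step of
   the Bernoulli recursion. *)

(** * Extended sums over the state space *)

Section ExtendedSums.
Variable R : realType.

Lemma esumZl (T : choiceType) (I : set T) (k : R) (f : T -> \bar R) :
  0 <= k -> (forall i, (0 <= f i)%E) ->
  \esum_(i in I) (k%:E * f i)%E = (k%:E * \esum_(i in I) f i)%E.
Proof.
move=> k_ge0 f_ge0; rewrite /esum -ereal_supZl //; last first.
  by apply/set0P; exists 0%E, set0; [exact: fsets_set0 | rewrite fsbig_set0].
congr ereal_sup; apply/seteqP; split=> _ [A IA <-].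
  by exists (\sum_(i \in A) f i)%E; [exists A | rewrite ge0_mule_fsumr].
by case: IA => B IB <-; exists B => //; rewrite ge0_mule_fsumr.
Qed.

Lemma esum_single (T : choiceType) (f : T -> R) (t : T) :
  (forall s, s <> t -> f s = 0) -> 0 <= f t ->
  \esum_(s in [set: T]) (f s)%:E = (f t)%:E.
Proof.
move=> f_out f_ge0; rewrite -(@esum_set1 R _ t (fun s => (f s)%:E)) ?lee_fin //.
rewrite [RHS]esum_mkcond; apply: eq_esum => s _.
case: (boolP (s \in [set t])) => // /negP s_t.
by rewrite f_out // => st; apply: s_t; rewrite st inE.
Qed.

Lemma esum_GState_telescope (f : GState -> R) (h : nat -> R) :
  (forall s, 0 <= f s) -> (forall n, f (Some n.+2) = h n.+2 - h n.+3) ->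
  h @ \oo --> 0 ->
  \esum_(s in [set: GState]) (f s)%:E =
  (f None + f (Some 0%N) + f (Some 1%N) + h 2%N)%:E.
Proof.
move=> f_ge0 f_tel h_cvg.
pose e k : GState := if k is k'.+1 then Some k' else None.
have -> : [set: GState] = e @` [set: nat].
  by apply/seteqP; split=> // -[k|] _; [exists k.+1 | exists 0%N].
rewrite esum_image; last by move=> [|i] [|j] //= _ _ [->].
rewrite -nneseries_esumT; last by move=> n; rewrite lee_fin.
set C := f None + f (Some 0%N) + f (Some 1%N) + h 2%N.
have partial k : \sum_(0 <= i < k.+3) (f (e i))%:E = (C - h k.+2)%:E.
  rewrite sumEFin big_nat_recl // big_nat_recl // big_nat_recl //=.
  rewrite (@telescope_sumr_eq _ 0 k (fun i => - h i.+2)) // => [|i _].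
    by rewrite /C; congr EFin; ring.
  by rewrite f_tel; ring.
suff : (fun n => \sum_(0 <= i < n) (f (e i))%:E) @ \oo --> C%:E by exact: cvg_lim.
rewrite -(cvg_shiftn 3) /=; under eq_fun do rewrite addn3 partial.
apply: cvg_EFin; first exact: nearW.
rewrite -[X in _ --> X](subr0 C); apply: cvgB; first exact: cvg_cst.
by move: h_cvg; rewrite -(@cvg_shiftn 2 R^o h) /=; under eq_fun do rewrite addn2.
Qed.

Lemma esum_GState_head (f : GState -> R) :
  (forall s, 0 <= f s) -> (forall n, f (Some n.+2) = 0) ->
  \esum_(s in [set: GState]) (f s)%:E = (f None + f (Some 0%N) + f (Some 1%N))%:E.
Proof.
move=> f_ge0 f_tail; rewrite (@esum_GState_telescope f (fun=> 0)) ?addr0 //.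
  by move=> n; rewrite f_tail subrr.
exact: (@cvg_cst R^o).
Qed.

End ExtendedSums.

(** * The thinned Bernoulli field *)

Lemma forall_ordE n (P : pred nat) : [forall j : 'I_n, P j] = all P (iota 0 n).
Proof.
apply/forallP/allP => [Pn j|Pn j]; last by apply: Pn; rewrite mem_iota add0n /= ltn_ord.
by rewrite mem_iota add0n => /= j_lt_n; exact: (Pn (Ordinal j_lt_n)).
Qed.

Lemma sum_tuple_cons (R : nmodType) k (F : k.+1.-tuple bool -> R) :
  \sum_(t : k.+1.-tuple bool) F t =
  \sum_(a : bool) \sum_(t : k.-tuple bool) F [tuple of a :: t].
Proof.
rewrite pair_big /= (reindex (fun bt : bool * k.-tuple bool => [tuple of bt.1 :: bt.2])).
  by apply: eq_bigr => -[a t].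
apply: onW_bij; exists (fun t => (thead t, [tuple of behead t])).
  by case=> a t; congr pair; apply: val_inj.
by move=> t; rewrite [RHS]tuple_eta.
Qed.

Definition T_rule (a b d : bool) : bool := b && (a || d).

Fixpoint T_matches (t x : seq bool) : bool :=
  if x is c :: y then
    (T_rule (nth false t 0) (nth false t 1) (nth false t 2) == c) && T_matches (behead t) y
  else true.

Lemma T_matchesE t x :
  T_matches t x =
  all (fun j => T_rule (nth false t j) (nth false t j.+1) (nth false t j.+2) == nth false x j)
      (iota 0 (size x)).
Proof.
elim: x t => [|c y IHy] t //=.
rewrite IHy -add1n iotaDl all_map; congr (_ && _).
by apply: eq_all => j /=; rewrite !nth_behead.
Qed.

Lemma ext_shift (a : int) n (w : n.-tuple bool) (k : nat) : (k < n)%N ->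
  ext a w (a + k%:Z) = nth false w k.
Proof.
move=> k_lt_n; rewrite /ext (_ : a + k%:Z - a = k%:Z); last by ring.
by rewrite le0z_nat ltz_nat k_lt_n absz_nat.
Qed.

Lemma T_map_ext (m : int) n (w : n.+2.-tuple bool) (j : nat) : (j < n)%N ->
  T_map (ext (m - 1) w) (m + j%:Z) =
  T_rule (nth false w j) (nth false w j.+1) (nth false w j.+2).
Proof.
move=> j_lt_n; rewrite /T_map /T_rule.
have -> : m + j%:Z = m - 1 + j.+1%:Z by rewrite -addn1 PoszD; ring.
have -> : m - 1 + j.+1%:Z - 1 = m - 1 + j%:Z by rewrite -addn1 PoszD; ring.
have -> : m - 1 + j.+1%:Z + 1 = m - 1 + j.+2%:Z by rewrite -addn1 PoszD; ring.
by rewrite !ext_shift //; lia.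
Qed.

Lemma T_map_ext_matches (m : int) (x : seq bool) (w : (size x).+2.-tuple bool) :
  [forall j : 'I_(size x), T_map (ext (m - 1) w) (m + j%:Z) == nth false x j] =
  T_matches w x.
Proof.
rewrite (@forall_ordE (size x)
  (fun j : nat => T_map (ext (m - 1) w) (m + j%:Z) == nth false x j)).
rewrite T_matchesE; apply: eq_in_all => j; rewrite mem_iota add0n /= => j_lt.
by rewrite T_map_ext.
Qed.

Definition bern (R : pzRingType) (q : R) (b : bool) : R := if b then q else 1 - q.

Section BernoulliSide.
Variables (R : realType) (p : R).

(* The mu_p-probability that (T w)_(i + j) = y_j for all j, given
   (w_(i-1), w_i) = (a, b). *)
Fixpoint tbf_cond (a b : bool) (y : seq bool) : R :=
  if y is c :: y' then \sum_(d : bool) bern p d * (T_rule a b d == c)%:R * tbf_cond b d y'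
  else 1.

Lemma tbf_cond_10 y : tbf_cond true false y = tbf_cond false false y.
Proof. by case: y. Qed.

Lemma prod_bern_cons k a (t : k.-tuple bool) :
  \prod_(j < k.+1) (if tnth [tuple of a :: t] j then p else 1 - p) =
  bern p a * \prod_(j < k) (if tnth t j then p else 1 - p).
Proof. by rewrite big_ord_recl tnth0; congr (_ * _); apply: eq_bigr => j _; rewrite tnthS. Qed.

Lemma sum_T_matches (x : seq bool) a b :
  \sum_(t : (size x).-tuple bool)
     (\prod_(j < size x) (if tnth t j then p else 1 - p)) * (T_matches [:: a, b & t] x)%:R
  = tbf_cond a b x.
Proof.
elim: x a b => [|c y IHy] a b /=.
  by rewrite (big_pred1 [tuple]) ?big_ord0 ?mulr1 // => t; symmetry; apply/eqP/tuple0.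
rewrite sum_tuple_cons; apply: eq_bigr => d _.
rewrite -IHy mulr_sumr; apply: eq_bigr => t _.
by rewrite prod_bern_cons /=; case: (_ == c); rewrite /= ?mul0r ?mulr0 ?mul1r ?mulr1 //; ring.
Qed.

Lemma tbf_cylE (m : int) x :
  tbf_cyl p m x = \sum_(a : bool) \sum_(b : bool) bern p a * bern p b * tbf_cond a b x.
Proof.
rewrite /tbf_cyl /mu_p_window.
under eq_bigr do rewrite /= T_map_ext_matches.
rewrite sum_tuple_cons; apply: eq_bigr => a _.
rewrite sum_tuple_cons; apply: eq_bigr => b _.
rewrite -sum_T_matches mulr_sumr; apply: eq_bigr => t _.
by rewrite !prod_bern_cons /=; ring.
Qed.

Lemma tbf_cyl_nil (m : int) : tbf_cyl p m [::] = 1.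
Proof. by rewrite tbf_cylE !big_bool /= /bern; ring. Qed.

Definition pair_weight (a b : bool) : R :=
  match a, b with
  | true, true => p ^+ 2
  | true, false => p ^+ 2 * (1 - p)
  | false, true => p * (1 - p)
  | false, false => (1 - p) ^+ 2 * (1 + p)
  end.

Lemma tbf_cyl_cons (m : int) x0 y :
  tbf_cyl p m (x0 :: y) =
  \sum_(a : bool) \sum_(b : bool) (a == x0)%:R * pair_weight a b * tbf_cond a b y.
Proof.
rewrite tbf_cylE !big_bool /= !big_bool /= !tbf_cond_10 /bern.
by case: x0 => /=; ring.
Qed.

End BernoulliSide.

(** * Paths of the GHoC chain *)

Definition next_state (s : GState) (b : bool) : GState :=
  match s with
  | Some 0 | Some 1 => if b then Some 1 else Some 2
  | Some n => if b then Some 0 else Some n.+1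
  | None => if b then Some 0 else None
  end.

Lemma tau_next_state s b : tau (next_state s b) = b.
Proof. by case: s => [[|[|n]]|]; case: b. Qed.

Lemma next_state_neq_None s b : s != None -> next_state s b != None.
Proof. by case: s => [[|[|n]]|]; case: b. Qed.

Section Paths.
Variables (R : realType) (p : R).

Lemma Pi_p_support s t : Pi_p p s t != 0 -> t = next_state s (tau t).
Proof.
case: s => [[|[|n]]|]; rewrite /Pi_p /=.
- by case: (t =P Some 1) => [->|]; rewrite ?eqxx.
- by case: (t =P Some 1) => [->//|_]; case: (t =P Some 2) => [->//|_]; rewrite eqxx.
- by case: (t =P Some n.+3) => [->//|_]; case: (t =P Some 0) => [->//|_]; rewrite eqxx.
- by case: (t =P None) => [->//|_]; case: (t =P Some 0) => [->//|_]; rewrite eqxx.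
Qed.

Fixpoint state_path (s : GState) (y : seq bool) : seq GState :=
  if y is b :: y' then next_state s b :: state_path (next_state s b) y' else [::].

Fixpoint path_weight (s : GState) (y : seq bool) : R :=
  if y is b :: y' then Pi_p p s (next_state s b) * path_weight (next_state s b) y'
  else 1.

Lemma size_state_path s y : size (state_path s y) = size y.
Proof. by elim: y s => [|b y IHy] s //=; rewrite IHy. Qed.

Lemma map_tau_state_path s y : map tau (state_path s y) = y.
Proof. by elim: y s => [|b y IHy] s //=; rewrite IHy tau_next_state. Qed.

Definition transition_prod (s : GState) (rest : seq GState) : R :=
  \prod_(j < size rest) Pi_p p (nth s (s :: rest) j) (nth s (s :: rest) j.+1).

Lemma transition_prod_cons s t rest :
  transition_prod s (t :: rest) = Pi_p p s t * transition_prod t rest.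
Proof.
rewrite /transition_prod /= big_ord_recl /=; congr (_ * _).
apply: eq_bigr => i _ /=.
rewrite (@set_nth_default _ (t :: rest) s t i) /=; last by rewrite ltnS ltnW.
by rewrite (@set_nth_default _ rest s t i).
Qed.

Lemma transition_prod_state_path s y :
  transition_prod s (state_path s y) = path_weight s y.
Proof.
elim: y s => [|b y IHy] s /=; first by rewrite /transition_prod big_ord0.
by rewrite transition_prod_cons IHy.
Qed.

Lemma transition_prod_neq0 s rest :
  transition_prod s rest != 0 -> rest = state_path s (map tau rest).
Proof.
elim: rest s => [|t rest IHrest] s //=.
rewrite transition_prod_cons mulf_eq0 negb_or => /andP[/Pi_p_support st /IHrest].
by rewrite -st => <-.
Qed.

Lemma ghoc_tau_cyl_nil (pi : GState -> R) : ghoc_tau_cyl p pi [::] = 1%E.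
Proof.
rewrite /ghoc_tau_cyl.
have -> : [set s : seq GState | size s = 0%N /\ map tau s = [::]] = [set [::]].
  by apply/seteqP; split=> [[|? ?] []|_ ->].
by rewrite esum_set1 // lee_fin.
Qed.

Lemma ghoc_tau_cyl_cons (pi : GState -> R) x0 y :
  ghoc_tau_cyl p pi (x0 :: y) =
  \esum_(s0 in [set s0 | tau s0 = x0]) (pi s0 * path_weight s0 y)%:E.
Proof.
rewrite /ghoc_tau_cyl.
set A := [set s | _].
set B := (fun s0 => s0 :: state_path s0 y) @` [set s0 | tau s0 = x0].
have -> : \esum_(s in A) (path_prob p pi s)%:E = \esum_(s in B) (path_prob p pi s)%:E.
  rewrite esum_mkcond [RHS]esum_mkcond; apply: eq_esum => s _.
  case: (boolP (s \in B)) => sB.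
    suff -> : s \in A by [].
    move: sB; rewrite inE => -[s0 /= t0 <-]; rewrite mem_set // /A /=.
    by rewrite size_state_path map_tau_state_path t0.
  case: (boolP (s \in A)) => // sA.
  move: sA; rewrite inE; case: s sB => [|s0 rest] sB [//= [_] [t0 tau_rest]].
  have [prod0|/transition_prod_neq0] := eqVneq (transition_prod s0 rest) 0.
    by rewrite /= -/(transition_prod s0 rest) prod0 mulr0.
  by rewrite tau_rest => rest_path; move: sB; rewrite rest_path mem_set //; exists s0.
rewrite esum_image; last by move=> u v _ _ [].
by apply: eq_esum => s0 _; rewrite /= -/(transition_prod s0 _) transition_prod_state_path.
Qed.

End Paths.

(** * The rates g_p and the stationary distribution *)

Section GHoC.
Variables (R : realType) (p : R).
Hypotheses (p_gt0 : 0 < p) (p_lt1 : p < 1).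

Let disc := Num.sqrt ((1 - p) * (3 * p + 1)).

Let disc_sqr : disc ^+ 2 = (1 - p) * (3 * p + 1).
Proof. rewrite sqr_sqrtr //; have := p_gt0; have := p_lt1; nra. Qed.

Let disc_ge0 : 0 <= disc. Proof. exact: sqrtr_ge0. Qed.

Let disc_gt : 1 - p < disc.
Proof.
have : (disc - (1 - p)) * (disc + (1 - p)) = 4 * p * (1 - p).
  by rewrite -subr_sqr disc_sqr; ring.
by have := disc_ge0; have := p_gt0; have := p_lt1; nra.
Qed.

Let disc_lt : disc < 1 + p.
Proof.
have : (1 + p - disc) * (1 + p + disc) = 4 * p ^+ 2.
  by rewrite -subr_sqr disc_sqr; ring.
by have := disc_ge0; have := p_gt0; have := p_lt1; nra.
Qed.

Lemma lamPF_gt0 : 0 < lamPF p.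
Proof.
rewrite /lamPF -/disc.
by have := disc_gt; have := disc_lt; have := p_gt0; have := p_lt1; lra.
Qed.

Lemma lamPF_lt1 : lamPF p < 1.
Proof.
rewrite /lamPF -/disc.
by have := disc_gt; have := disc_lt; have := p_gt0; have := p_lt1; lra.
Qed.

Lemma lamr_lt0 : lamr p < 0.
Proof.
rewrite /lamr -/disc.
by have := disc_gt; have := disc_lt; have := p_gt0; have := p_lt1; lra.
Qed.

Lemma lamPF_add_lamr : lamPF p + lamr p = 1 - p.
Proof. by rewrite /lamPF /lamr; field. Qed.

Lemma lamPF_mul_lamr : lamPF p * lamr p = - (p * (1 - p)).
Proof.
rewrite /lamPF /lamr -/disc.
transitivity (((1 - p) ^+ 2 - disc ^+ 2) / 4); first by field.
by rewrite disc_sqr; field.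
Qed.

Lemma eigenvalue_sqr (l : R) : l = lamPF p \/ l = lamr p ->
  l ^+ 2 = (1 - p) * l + p * (1 - p).
Proof.
have -> : l ^+ 2 = (lamPF p + lamr p) * l - lamPF p * lamr p
                   + (l - lamPF p) * (l - lamr p) by ring.
by rewrite lamPF_add_lamr lamPF_mul_lamr; case=> ->; rewrite subrr ?mulr0 ?mul0r; ring.
Qed.

Lemma a_ratio_lt0 : a_ratio p < 0.
Proof. by rewrite /a_ratio pmulr_llt0 ?invr_gt0 ?lamr_lt0 ?lamPF_gt0. Qed.

Lemma lamPF_mul_a_ratio : lamPF p * a_ratio p = lamr p.
Proof. by rewrite /a_ratio mulrC divfK // gt_eqF ?lamPF_gt0. Qed.

Lemma norm_a_ratio_lt1 : `|a_ratio p| < 1.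
Proof.
rewrite ltr0_norm ?a_ratio_lt0 // /a_ratio -mulNr ltr_pdivrMr ?lamPF_gt0 //.
by have := lamPF_add_lamr; have := p_lt1; lra.
Qed.

Let D k := (1 - lamPF p)^-1 - a_ratio p ^+ k / (1 - lamr p).

Let D_gt0 k : 0 < D k.
Proof.
have r_lt_L : 1 - lamPF p < 1 - lamr p.
  by have := lamPF_gt0; have := lamr_lt0; lra.
have Lr_gt0 : 0 < 1 - lamPF p by have := lamPF_lt1; lra.
have ak_le1 : a_ratio p ^+ k <= 1.
  apply: le_trans (ler_norm _) _; rewrite normrX exprn_ile1 //.
  exact: ltW norm_a_ratio_lt1.
have Lr'_gt0 := lt_trans Lr_gt0 r_lt_L.
rewrite subr_gt0; apply: (@le_lt_trans _ _ (1 - lamr p)^-1).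
  by rewrite ler_pdivrMr // mulVf ?gt_eqF.
by rewrite ltf_pV2 // posrE.
Qed.

Let signed_norm_a k : (-1) ^+ k.+1 * `|a_ratio p| ^+ k = - a_ratio p ^+ k.
Proof.
rewrite ltr0_norm ?a_ratio_lt0 // (exprNn (a_ratio p)) mulrA -exprD.
by rewrite -signr_odd addSn addnn /= odd_double expr1 mulN1r.
Qed.

Let g_fin_closed n : g_fin p n.+1 = lamPF p * D n.+1 / D n.
Proof.
by rewrite /g_fin /D !signed_norm_a; apply: f_equal2; [|apply: f_equal]; ring.
Qed.

Lemma g_fin_gt0 n : 0 < g_fin p n.+1.
Proof.
by rewrite g_fin_closed; apply: divr_gt0 => //; apply: mulr_gt0; rewrite ?lamPF_gt0.
Qed.

Lemma g_fin_one : g_fin p 1%N = 1.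
Proof.
have [L1 r1] : 1 - lamPF p != 0 /\ 1 - lamr p != 0.
  by split; apply: lt0r_neq0; have := lamPF_lt1; have := lamr_lt0; lra.
rewrite g_fin_closed; have -> : lamPF p * D 1 = D 0.
  rewrite /D expr1 expr0 mulrBr mulrA lamPF_mul_a_ratio.
  by field; rewrite L1 r1.
by rewrite divff // gt_eqF.
Qed.

Lemma g_fin_mul_rec n :
  g_fin p n.+2 * g_fin p n.+1 = (1 - p) * g_fin p n.+1 + p * (1 - p).
Proof.
have D_rec : lamPF p ^+ 2 * D n.+2 =
    (1 - p) * lamPF p * D n.+1 + p * (1 - p) * D n.
  apply/eqP; rewrite -subr_eq0; apply/eqP.
  transitivity ((1 - lamPF p)^-1 *
      (lamPF p ^+ 2 - (1 - p) * lamPF p - p * (1 - p)) -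
    a_ratio p ^+ n / (1 - lamr p) *
      ((lamPF p * a_ratio p) ^+ 2 - (1 - p) * (lamPF p * a_ratio p) - p * (1 - p))).
    by rewrite /D !exprS; ring.
  rewrite lamPF_mul_a_ratio !eigenvalue_sqr; [ring | by right | by left].
have Dn := D_gt0 n; have Dn1 := D_gt0 n.+1.
rewrite !g_fin_closed.
transitivity (lamPF p ^+ 2 * D n.+2 / D n); first by field; rewrite !gt_eqF.
by rewrite D_rec; field; rewrite gt_eqF.
Qed.

Lemma g_fin_rec n : g_fin p n.+2 = (1 - p) + p * (1 - p) / g_fin p n.+1.
Proof.
have g_neq0 := lt0r_neq0 (g_fin_gt0 n).
by apply: (mulIf g_neq0); rewrite g_fin_mul_rec; field.
Qed.

Lemma g_fin_two : g_fin p 2%N = 1 - p ^+ 2.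
Proof. by rewrite g_fin_rec g_fin_one divr1; ring. Qed.

(* The upper bound is the image of the lower one under x |-> 1 - p + p (1 - p) / x. *)
Lemma g_fin_bounds n :
  1 - p ^+ 2 <= g_fin p n.+2 <= (1 + p - p ^+ 2) / (1 + p).
Proof.
have := p_gt0; have := p_lt1 => ? ?.
have p1_gt0 : 0 < 1 + p by lra.
elim: n => [|n /andP[lo hi]].
  by rewrite g_fin_two lexx /= ler_pdivlMr //; nra.
rewrite g_fin_rec ler_pdivlMr //.
move: (g_fin p n.+2) lo hi => x lo; rewrite ler_pdivlMr // => hi.
have x_gt0 : 0 < x by nra.
set y := p * (1 - p) / x; have yx : y * x = p * (1 - p) by rewrite divfK ?gt_eqF.
have y_gt0 : 0 < y by rewrite divr_gt0 // mulr_gt0 // subr_gt0.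
have x_le1 : x <= 1 by nra.
apply/andP; split.
  have : 0 <= y * (1 - x) by rewrite mulr_ge0 ?subr_ge0 // ltW.
  by nra.
have : 0 <= y * (x - (1 - p ^+ 2)) by rewrite mulr_ge0 ?subr_ge0 // ltW.
by rewrite mulrBr yx => /(mulr_ge0 (ltW p1_gt0)); nra.
Qed.

Fixpoint stat_weight (n : nat) : R :=
  match n with
  | 0 => (1 - p) * p ^+ 2
  | 1 => p ^+ 2
  | 2 => (1 - p) * p ^+ 2
  | (k.+2 as m).+1 => g_fin p m * stat_weight m
  end.

Arguments stat_weight : simpl never.

Lemma stat_weight0 : stat_weight 0%N = (1 - p) * p ^+ 2. Proof. by []. Qed.
Lemma stat_weight1 : stat_weight 1%N = p ^+ 2. Proof. by []. Qed.
Lemma stat_weight2 : stat_weight 2%N = (1 - p) * p ^+ 2. Proof. by []. Qed.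

Lemma stat_weight_rec n : stat_weight n.+3 = g_fin p n.+2 * stat_weight n.+2.
Proof. by []. Qed.

Lemma stat_weight_rec2 n :
  stat_weight n.+4 = (1 - p) * stat_weight n.+3 + p * (1 - p) * stat_weight n.+2.
Proof. by rewrite !stat_weight_rec mulrA g_fin_mul_rec; ring. Qed.

Lemma stat_weight_ge0 n : 0 <= stat_weight n.
Proof.
have := p_gt0; have := p_lt1 => ? ?.
have w2_ge0 : 0 <= stat_weight 2 by rewrite stat_weight2 mulr_ge0 ?sqr_ge0 //; lra.
case: n => [|[|n]]; first by rewrite stat_weight0 mulr_ge0 ?sqr_ge0 //; lra.
  by rewrite stat_weight1 sqr_ge0.
elim: n => [//|n IHn].
by rewrite stat_weight_rec mulr_ge0 // ltW ?g_fin_gt0.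
Qed.

Lemma stat_weight_cvg : stat_weight @ \oo --> 0.
Proof.
have := p_gt0; have := p_lt1 => ? ?.
set q := (1 + p - p ^+ 2) / (1 + p).
have q_ge0 : 0 <= q by rewrite divr_ge0 //; nra.
have q_lt1 : q < 1 by rewrite ltr_pdivrMr; nra.
have decay n : stat_weight n.+2 <= stat_weight 2 * q ^+ n.
  elim: n => [|n IHn]; first by rewrite mulr1.
  rewrite stat_weight_rec exprS mulrCA ler_pM ?stat_weight_ge0 //.
    by rewrite ltW ?g_fin_gt0.
  by case/andP: (g_fin_bounds n).
rewrite -(@cvg_shiftn 2 R^o) /=.
apply: (@squeeze_cvgr _ _ _ _ (fun=> 0) (geometric (stat_weight 2) q)).
- by near=> n; rewrite addn2 stat_weight_ge0 decay.
- exact: (@cvg_cst R^o).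
- by apply: cvg_geometric; rewrite ger0_norm.
Unshelve. all: by end_near.
Qed.

Definition pi_ghoc (s : GState) : R := if s is Some n then stat_weight n else 0.

Lemma pi_ghoc_ge0 s : 0 <= pi_ghoc s.
Proof. by case: s => //= n; exact: stat_weight_ge0. Qed.

(* (a, b) stands for (w_i, w_(i+1)) given n_i = s.  As tbf_cond true false =
   tbf_cond false false, w_i only matters when w_(i+1) = 1; for n >= 2 the
   parameter of w_(i+1) makes the next state 0 with probability 1 - g_p n. *)
Definition hidden_pair (s : GState) (a b : bool) : R :=
  match s with
  | Some 0 => (a && b)%:R
  | Some 1 => a%:R * bern p b
  | Some n => (~~ a)%:R * bern ((1 - g_fin p n) / p) b
  | None => 0
  end.

Lemma hidden_pair_ge0 s a b : 0 <= hidden_pair s a b.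
Proof.
have := p_gt0; have := p_lt1 => ? ?.
case: s => [[|[|n]]|] //=; rewrite mulr_ge0 //; first by case: b => /=; lra.
have /andP[lo] := g_fin_bounds n; rewrite ler_pdivlMr; last by lra.
move: (g_fin p n.+2) lo => x lo hi; case: b => /=.
  by rewrite divr_ge0 //; nra.
by rewrite subr_ge0 ler_pdivrMr //; nra.
Qed.

Lemma sum_hidden_pair s : s != None -> \sum_(a : bool) \sum_(b : bool) hidden_pair s a b = 1.
Proof. by case: s => [[|[|n]]|] // _; rewrite !big_bool /= /bern; ring. Qed.

Lemma path_weight_hidden s y : s != None ->
  path_weight p s y = \sum_(a : bool) \sum_(b : bool) hidden_pair s a b * tbf_cond p a b y.
Proof.
elim: y s => [|c y IHy] s s_ok.
  rewrite /= -[LHS](sum_hidden_pair s_ok).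
  by apply: eq_bigr => a _; apply: eq_bigr => b _; rewrite mulr1.
rewrite /= {}IHy ?next_state_neq_None //.
have p_neq0 : p != 0 by rewrite gt_eqF.
case: s s_ok => [[|[|n]]|] // _; case: c;
  rewrite !big_bool /= /Pi_p /bern /T_rule /= ?eqxx /= ?tbf_cond_10; try ring.
- have -> : (1 - g_fin p 2%N) / p = p by rewrite g_fin_two; field.
  ring.
- by field; exact: p_neq0.
- have g_neq0 := lt0r_neq0 (g_fin_gt0 n.+1).
  by rewrite (g_fin_rec n.+1); field; rewrite g_neq0 p_neq0.
Qed.

Lemma esum_hidden_pair a b :
  \esum_(s in [set: GState]) (pi_ghoc s * hidden_pair s a b)%:E = (pair_weight p a b)%:E.
Proof.
have p_neq0 : p != 0 by rewrite gt_eqF.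
have f_ge0 a' b' s : 0 <= pi_ghoc s * hidden_pair s a' b'.
  by rewrite mulr_ge0 ?pi_ghoc_ge0 ?hidden_pair_ge0.
case: a; last case: b.
- rewrite esum_GState_head // => [|n]; last by rewrite /= mul0r mulr0.
  by case: b; rewrite /= stat_weight0 stat_weight1 /bern; congr EFin; ring.
- rewrite (@esum_GState_telescope _ _ (fun n => stat_weight n / p)) //.
  + by rewrite /= stat_weight2 /bern; congr EFin; field; exact: p_neq0.
  + by move=> n; rewrite /= stat_weight_rec /bern; field; exact: p_neq0.
  + rewrite -[0](mul0r p^-1); apply: cvgM; last exact: (@cvg_cst R^o).
    exact: stat_weight_cvg.
- rewrite (@esum_GState_telescope _ _ (fun n => stat_weight n.+1 / p ^+ 2)) //.
  + rewrite /= (stat_weight_rec 0) g_fin_two stat_weight2 /bern.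
    by congr EFin; field; exact: p_neq0.
  + by move=> n; rewrite /= stat_weight_rec2 stat_weight_rec /bern; field; exact: p_neq0.
  + rewrite -[0](mul0r (p ^+ 2)^-1); apply: cvgM; last exact: (@cvg_cst R^o).
    by move: stat_weight_cvg; rewrite -(@cvg_shiftS R^o).
Qed.

Lemma pi_ghoc_decomp s :
  pi_ghoc s = \sum_(a : bool) \sum_(b : bool) pi_ghoc s * hidden_pair s a b.
Proof.
case: s => [n|]; last by rewrite /= !big_bool /= !mul0r !addr0.
rewrite -[LHS]mulr1 -[in LHS](@sum_hidden_pair (Some n)) // mulr_sumr.
by apply: eq_bigr => a _; rewrite mulr_sumr.
Qed.

Lemma pi_ghoc_total : \esum_(s in [set: GState]) (pi_ghoc s)%:E = 1%E.
Proof.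
have f_ge0 s a b : (0 <= (pi_ghoc s * hidden_pair s a b)%:E)%E.
  by rewrite lee_fin mulr_ge0 ?pi_ghoc_ge0 ?hidden_pair_ge0.
transitivity (\esum_(s in [set: GState])
    \sum_(a : bool) \sum_(b : bool) (pi_ghoc s * hidden_pair s a b)%:E).
  apply: eq_esum => s _; rewrite [in LHS]pi_ghoc_decomp -sumEFin.
  by apply: eq_bigr => a _; rewrite sumEFin.
rewrite esum_sum => [|s a _ _]; last exact: sume_ge0.
transitivity (\sum_(a : bool) \sum_(b : bool) (pair_weight p a b)%:E).
  apply: eq_bigr => a _; rewrite esum_sum //.
  by apply: eq_bigr => b _; exact: esum_hidden_pair.
by rewrite !big_bool /= -!EFinD; congr EFin; ring.
Qed.

Lemma Pi_p_ge0 s t : 0 <= Pi_p p s t.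
Proof.
have := p_gt0; have := p_lt1 => ? ?.
have := lamPF_gt0; have := lamPF_lt1 => ? ?.
case: s => [[|[|n]]|]; rewrite /Pi_p /=; repeat case: ifP => _;
  rewrite ?ler01 ?lexx //; try lra.
  exact: ltW (g_fin_gt0 n.+1).
by case/andP: (g_fin_bounds n) => _; rewrite ler_pdivlMr ?subr_ge0; nra.
Qed.

Lemma pi_ghoc_stationary : stationary_dist p pi_ghoc.
Proof.
have f_ge0 t s : 0 <= pi_ghoc s * Pi_p p s t by rewrite mulr_ge0 ?pi_ghoc_ge0 ?Pi_p_ge0.
split; [exact: pi_ghoc_ge0 | split; [exact: pi_ghoc_total |]].
case=> [[|[|[|k]]]|].
- rewrite (@esum_GState_telescope _ _ stat_weight) //.
  + by rewrite /= stat_weight2 stat_weight0; congr EFin; ring.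
  + by move=> n; rewrite /= stat_weight_rec; ring.
  + exact: stat_weight_cvg.
- rewrite esum_GState_head // => [|n]; last by rewrite /Pi_p /= mulr0.
  by rewrite /= stat_weight0 stat_weight1; congr EFin; ring.
- rewrite esum_GState_head // => [|n]; last by rewrite /Pi_p /= mulr0.
  by rewrite /= stat_weight1 stat_weight2; congr EFin; ring.
- rewrite (@esum_single _ _ _ (Some k.+2)) //.
    by rewrite /= eqxx mulrC.
  case=> [[|[|n]]|] n_k //=; rewrite ?mulr0 ?mul0r //.
  by case: (Some k.+3 =P Some n.+3) => [[e]|_]; [case: n_k; rewrite e | rewrite mulr0].
- rewrite (@esum_single _ _ _ None) //= ?mul0r //.
  by case=> [[|[|n]]|] //= _; rewrite mulr0.
Qed.

Lemma stationary_dist_proportional pi : stationary_dist p pi ->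
  pi = (fun s => pi (Some 1%N) / p ^+ 2 * pi_ghoc s).
Proof.
move=> [pi_ge0 [_ pi_st]].
have := p_gt0; have := p_lt1 => ? ?.
have f_ge0 t s : 0 <= pi s * Pi_p p s t by rewrite mulr_ge0 ?Pi_p_ge0.
have pi_None : pi None = 0.
  have := pi_st None; rewrite (@esum_single _ _ _ None) ?f_ge0 //=; last first.
    by case=> [[|[|n]]|] //= _; rewrite mulr0.
  move=> -[] fixed; apply/eqP.
  have : pi None * (1 - lamPF p) = 0 by rewrite mulrBr mulr1 fixed subrr.
  by move/eqP; rewrite mulf_eq0 subr_eq0 (gt_eqF lamPF_lt1) orbF.
have pi_0 : pi (Some 0%N) = (1 - p) * pi (Some 1%N).
  have := pi_st (Some 1%N).
  rewrite esum_GState_head //= => [|n]; last by rewrite /Pi_p /= mulr0.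
  by rewrite pi_None => -[]; lra.
have pi_2 : pi (Some 2%N) = (1 - p) * pi (Some 1%N).
  have := pi_st (Some 2%N).
  rewrite esum_GState_head //= => [|n]; last by rewrite /Pi_p /= mulr0.
  by rewrite pi_None => -[]; lra.
have pi_rec k : pi (Some k.+3) = g_fin p k.+2 * pi (Some k.+2).
  have := pi_st (Some k.+3); rewrite (@esum_single _ _ _ (Some k.+2)) ?f_ge0 //=.
    by rewrite eqxx mulrC => -[].
  case=> [[|[|n]]|] n_k //=; rewrite ?pi_None ?mulr0 ?mul0r //.
  by case: (Some k.+3 =P Some n.+3) => [[e]|_]; [case: n_k; rewrite e | rewrite mulr0].
have p2_neq0 : p ^+ 2 != 0 by rewrite expf_neq0 // gt_eqF.
apply: funext => -[n|]; last by rewrite pi_None mulr0.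
case: n => [|[|n]]; rewrite /= ?stat_weight0 ?stat_weight1.
- by rewrite pi_0 mulrCA divfK.
- by rewrite divfK.
elim: n => [|n IHn]; first by rewrite pi_2 stat_weight2 mulrCA divfK.
by rewrite pi_rec IHn stat_weight_rec mulrCA.
Qed.

Lemma stationary_dist_unique pi : stationary_dist p pi -> pi = pi_ghoc.
Proof.
move=> pi_st; have [pi_ge0 [pi_total _]] := pi_st.
have k_ge0 : 0 <= pi (Some 1%N) / p ^+ 2 by rewrite divr_ge0 ?sqr_ge0.
move: (pi (Some 1%N) / p ^+ 2) k_ge0 (stationary_dist_proportional pi_st) => k k_ge0 pi_k.
suff k1 : k = 1 by apply: funext => s; rewrite pi_k k1 mul1r.
move: pi_total; rewrite pi_k; under eq_esum do rewrite EFinM.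
rewrite esumZl // ?pi_ghoc_total ?mule1 => [[]//|s].
by rewrite lee_fin pi_ghoc_ge0.
Qed.

(** * The tau-image of the stationary chain *)

Lemma tbf_cond_ge0 a b y : 0 <= tbf_cond p a b y.
Proof.
have := p_gt0; have := p_lt1 => ? ?.
elim: y a b => [|c y IHy] a b /=; first exact: ler01.
by apply: sumr_ge0 => d _; rewrite !mulr_ge0 //; case: d; rewrite /bern; lra.
Qed.

Lemma hidden_pair_tau s a b : hidden_pair s a b != 0 -> a = tau s.
Proof. by case: s => [[|[|n]]|]; case: a => //=; rewrite ?mul0r eqxx. Qed.

Lemma path_weight_tau s x0 y :
  (tau s == x0)%:R * (pi_ghoc s * path_weight p s y) =
  \sum_(a : bool) \sum_(b : bool)
    ((a == x0)%:R * tbf_cond p a b y) * (pi_ghoc s * hidden_pair s a b).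
Proof.
have [->|s_ok] := eqVneq s None.
  rewrite /= !mul0r mulr0 big1 // => a _.
  by rewrite big1 // => b _; rewrite mulr0.
rewrite path_weight_hidden // !mulr_sumr; apply: eq_bigr => a _.
rewrite !mulr_sumr; apply: eq_bigr => b _.
have [->|/hidden_pair_tau ->] := eqVneq (hidden_pair s a b) 0.
  by rewrite !(mul0r, mulr0).
by rewrite (mulrC (hidden_pair s _ _)) !mulrA; congr (_ * _); rewrite mulrAC.
Qed.

Lemma ghoc_tau_cyl_pi_ghoc x0 y :
  ghoc_tau_cyl p pi_ghoc (x0 :: y) =
  (\sum_(a : bool) \sum_(b : bool) (a == x0)%:R * pair_weight p a b * tbf_cond p a b y)%:E.
Proof.
have c_ge0 a b : 0 <= (a == x0)%:R * tbf_cond p a b y by rewrite mulr_ge0 ?tbf_cond_ge0.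
have f_ge0 a b s : 0 <= pi_ghoc s * hidden_pair s a b.
  by rewrite mulr_ge0 ?pi_ghoc_ge0 ?hidden_pair_ge0.
rewrite ghoc_tau_cyl_cons esum_mkcond.
transitivity (\esum_(s in [set: GState]) \sum_(a : bool) \sum_(b : bool)
    (((a == x0)%:R * tbf_cond p a b y)%:E * (pi_ghoc s * hidden_pair s a b)%:E)%E).
  apply: eq_esum => s _.
  have -> : (s \in [set s0 | tau s0 = x0]) = (tau s == x0) by apply/idP/eqP; rewrite inE.
  transitivity (((tau s == x0)%:R * (pi_ghoc s * path_weight p s y))%:E).
    by case: eqP; rewrite ?mul1r ?mul0r.
  rewrite path_weight_tau -sumEFin; apply: eq_bigr => a _.
  by rewrite -sumEFin; apply: eq_bigr => b _; rewrite EFinM.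
rewrite esum_sum => [|s a _ _]; last by apply: sume_ge0 => b _; rewrite mule_ge0 ?lee_fin.
rewrite -sumEFin; apply: eq_bigr => a _.
rewrite esum_sum => [|s b _ _]; last by rewrite mule_ge0 ?lee_fin.
rewrite -sumEFin; apply: eq_bigr => b _.
rewrite esumZl // => [|s]; last by rewrite lee_fin.
by rewrite esum_hidden_pair -EFinM mulrAC.
Qed.

End GHoC.

Unset Implicit Arguments.

Theorem theorem3p7 (R : realType) (p : R) (hp : 0 < p < 1) :
  (exists! pi : GState -> R, stationary_dist p pi) /\
  (forall pi : GState -> R, stationary_dist p pi ->
     forall (m : int) (x : seq bool),
       ghoc_tau_cyl p pi x = (tbf_cyl p m x)%:E).
Proof.
have /andP[p_gt0 p_lt1] := hp.
have unique := stationary_dist_unique p_gt0 p_lt1.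
split.
  exists (pi_ghoc p); split; first exact: pi_ghoc_stationary.
  by move=> pi /unique.
move=> pi /unique -> m [|x0 y]; first by rewrite ghoc_tau_cyl_nil tbf_cyl_nil.
by rewrite (ghoc_tau_cyl_pi_ghoc p_gt0 p_lt1) tbf_cyl_cons.
Qed.
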